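(* Let $G$ be a connected oriented diagram with $V\ge 2$ vertices, internal legs $\ell_1,\dots,\ell_I$, and no tadpoles. For each leg $j$, let $a_j$ and $b_j$ denote the tail and head vertices of $\ell_j$. Fix complex numbers $\zeta_j^\pm,\xi_j^\pm$ with $\operatorname{Im}\zeta_j^+>0$, $\operatorname{Im}\xi_j^+>0$, $\operatorname{Im}\zeta_j^-<0$, $\operatorname{Im}\xi_j^-<0$. For real $t\neq 0$ define $$\tilde z_j(t)=i\theta(t)e^{it\zeta_j^+}-i\theta(-t)e^{it\zeta_j^-},\qquad \tilde u_j(t)=i\theta(t)e^{it\zeta_j^+}-i\theta(-t)e^{it\xi_j^-},$$ $$\tilde v_j(t)=i\theta(t)e^{it\xi_j^+}-i\theta(-t)e^{it\zeta_j^-},\qquad \tilde w_j(t)=i\theta(t)e^{it\xi_j^+}-i\theta(-t)e^{it\xi_j^-},$$ where $\theta$ is the Heaviside step function. For a marking $M$ (a subset of the vertex set, with $m=|M|$), let $\tilde p_{Mj}$ be given by: - $\tilde p_{Mj}=\tilde z_j$ if $a_j,b_j$ are both unmarked; - $\tilde p_{Mj}=\tilde w_j$ if both are marked; - $\tilde p_{Mj}=\tilde u_j$ if $a_j$ is unmarked and $b_j$ is marked; - $\tilde p_{Mj}=\tilde v_j$ if $a_j$ is marked and $b_j$ is unmarked. Then for every $V$-tuple of pairwise distinct real times $t_1,\dots,t_V$ (where $t_a$ is attached to vertex $\nu_a$), $$\sum_{M}(-1)^{|M|}\prod_{j=1}^I\tilde p_{Mj}(t_{a_j}-t_{b_j})=0,$$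 the sum running over all markings $M$.
   Context: A diagram is a finite graph with vertices $\nu_1,\dots,\nu_V$ and oriented internal legs $\ell_1,\dots,\ell_I$ (multiple legs allowed); a tadpole is a leg whose two endpoints coincide. Let $c$ be the number of connected components and $L=I-V+c$. The diagram is oriented if there exist $L$ simple cycles that are directed cycles with respect to the leg orientations and whose edge-indicator vectors in $\mathbb{R}^I$ are linearly independent. The functions $\tilde z_j,\tilde w_j,\tilde u_j,\tilde v_j$ are the Fourier transforms $\int\frac{dE}{2\pi}e^{iEt}(\cdot)$ of $z_j,w_j,u_j,v_j$ obtained with $\sigma_j^\pm(E)=1/(E-\zeta_j^\pm)$ and $\tau_j^\pm(E)=1/(E-\xi_j^\pm)$, where $z_j=\sigma_j^++\sigma_j^-$, $w_j=\tau_j^++\tau_j^-$, $u_j=\sigma_j^++\tau_j^-$, $v_j=\sigma_j^-+\tau_j^+$. *)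

From Stdlib Require Import Reals Lra Lia List.
Import ListNotations.
Open Scope R_scope.

Record Cplx := mkC { Re : R ; Im : R }.
Definition C0 : Cplx := mkC 0 0.
Definition Ci : Cplx := mkC 0 1.
Definition RtoC (x : R) : Cplx := mkC x 0.
Definition Cadd (z w : Cplx) : Cplx := mkC (Re z + Re w) (Im z + Im w).
Definition Copp (z : Cplx) : Cplx := mkC (- Re z) (- Im z).
Definition Csub (z w : Cplx) : Cplx := Cadd z (Copp w).
Definition Cmul (z w : Cplx) : Cplx :=
  mkC (Re z * Re w - Im z * Im w) (Re z * Im w + Im z * Re w).
Definition Cexp (z : Cplx) : Cplx := mkC (exp (Re z) * cos (Im z)) (exp (Re z) * sin (Im z)).
Definition Csum (l : list Cplx) : Cplx := fold_right Cadd C0 l.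
Definition Cprod (l : list Cplx) : Cplx := fold_right Cmul (RtoC 1) l.

Definition theta (t : R) : R := if Rlt_dec 0 t then 1 else 0.

Definition prop_ft (alpha beta : Cplx) (t : R) : Cplx :=
  Csub (Cmul (Cmul Ci (RtoC (theta t))) (Cexp (Cmul (Cmul Ci (RtoC t)) alpha)))
       (Cmul (Cmul Ci (RtoC (theta (- t)))) (Cexp (Cmul (Cmul Ci (RtoC t)) beta))).

Definition zt (zp zm : Cplx) := prop_ft zp zm.
Definition ut (zp xm : Cplx) := prop_ft zp xm.
Definition vt (xp zm : Cplx) := prop_ft xp zm.
Definition wt (xp xm : Cplx) := prop_ft xp xm.

(* ---------- Diagrams ----------
   Vertices are 0..V-1, legs are 0..I-1; leg j goes from tail tl j to head hd j. *)
Definition wf_diagram (V I : nat) (tl hd : nat -> nat) : Prop :=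
  forall j, (j < I)%nat -> (tl j < V)%nat /\ (hd j < V)%nat.

Definition no_tadpoles (I : nat) (tl hd : nat -> nat) : Prop :=
  forall j, (j < I)%nat -> tl j <> hd j.

Inductive reach (I : nat) (tl hd : nat -> nat) (a : nat) : nat -> Prop :=
| reach_refl : reach I tl hd a a
| reach_fw : forall b j, reach I tl hd a b -> (j < I)%nat -> tl j = b -> reach I tl hd a (hd j)
| reach_bw : forall b j, reach I tl hd a b -> (j < I)%nat -> hd j = b -> reach I tl hd a (tl j).

Definition connected (V I : nat) (tl hd : nat -> nat) : Prop :=
  (1 <= V)%nat /\ forall a b, (a < V)%nat -> (b < V)%nat -> reach I tl hd a b.

Definition directed_simple_cycle (I : nat) (tl hd : nat -> nat) (js : list nat) : Prop :=
  exists vs : list nat,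
    (1 <= length js)%nat /\ length vs = length js /\ NoDup js /\ NoDup vs /\
    forall i, (i < length js)%nat ->
      (nth i js 0%nat < I)%nat /\ tl (nth i js 0%nat) = nth i vs 0%nat /\
      hd (nth i js 0%nat) = nth ((i + 1) mod length js) vs 0%nat.

Definition indicator (js : list nat) (j : nat) : R :=
  if in_dec Nat.eq_dec j js then 1 else 0.

Definition lin_indep (I L : nat) (cyc : nat -> list nat) : Prop :=
  forall lam : nat -> R,
    (forall j, (j < I)%nat ->
       fold_right Rplus 0 (map (fun k => lam k * indicator (cyc k) j) (seq 0 L)) = 0) ->
    forall k, (k < L)%nat -> lam k = 0.

(* loop number L = I - V + c, here with c = 1 (connected diagram) *)
Definition oriented_connected (V I : nat) (tl hd : nat -> nat) : Prop :=
  let L := (I + 1 - V)%nat in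
  exists cyc : nat -> list nat,
    (forall k, (k < L)%nat -> directed_simple_cycle I tl hd (cyc k)) /\
    lin_indep I L cyc.

(* ---------- Markings ----------
   A marking of the V vertices is a list of V booleans (true = marked). *)
Fixpoint markings (V : nat) : list (list bool) :=
  match V with
  | O => [ [] ]
  | S n => map (cons false) (markings n) ++ map (cons true) (markings n)
  end.

Definition marked (M : list bool) (a : nat) : bool := nth a M false.
Definition card_marking (M : list bool) : nat := count_occ Bool.bool_dec M true.

Definition p_tilde (M : list bool) (tl hd : nat -> nat)
    (zp zm xp xm : nat -> Cplx) (j : nat) : R -> Cplx :=
  match marked M (tl j), marked M (hd j) with
  | false, false => zt (zp j) (zm j)
  | true, true => wt (xp j) (xm j)
  | false, true => ut (zp j) (xm j)
  | true, false => vt (xp j) (zm j)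
  end.

Definition sign_pow (n : nat) : Cplx := RtoC ((-1) ^ n).

(* Let k be a vertex with the smallest time. A leg with tail k carries a negative time
   argument, so only its e^{i t beta} part survives, and beta depends on the marking of the
   head alone; symmetrically, a leg with head k depends only on the marking of its tail. As
   there are no tadpoles, the product over the legs does not change when the mark of k is
   toggled, while the sign (-1)^|M| does, so the markings cancel in pairs. *)

From Stdlib Require Import Reals List Lra Lia.
Import ListNotations.
Open Scope R_scope.

Lemma Cplx_ext (z w : Cplx) : Re z = Re w -> Im z = Im w -> z = w.
Proof. destruct z, w; simpl; intros -> ->; reflexivity. Qed.

Lemma Csum_app (l1 l2 : list Cplx) : Csum (l1 ++ l2) = Cadd (Csum l1) (Csum l2).
Proof.
  induction l1 as [|z l1 IH]; simpl.
  - apply Cplx_ext; simpl; ring.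
  - rewrite IH; apply Cplx_ext; simpl; ring.
Qed.

Lemma Csum_map_opp {A : Type} (f : A -> Cplx) (l : list A) :
  Csum (map (fun x => Copp (f x)) l) = Copp (Csum (map f l)).
Proof.
  induction l as [|x l IH]; simpl; rewrite ?IH; apply Cplx_ext; simpl; ring.
Qed.

Definition alt_sum (n : nat) (G : list bool -> Cplx) : Cplx :=
  Csum (map (fun M => Cmul (sign_pow (card_marking M)) (G M)) (markings n)).

Fixpoint flip (k : nat) (M : list bool) : list bool :=
  match M, k with
  | [], _ => []
  | b :: M', O => negb b :: M'
  | b :: M', S k' => b :: flip k' M'
  end.

Lemma marked_flip_neq (M : list bool) (k a : nat) :
  a <> k -> marked (flip k M) a = marked M a.
Proof.
  unfold marked; revert k a.
  induction M as [|b M IH]; intros [|k] [|a] Hak; simpl; auto with arith; lia.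
Qed.

Lemma alt_sum_S (n : nat) (G : list bool -> Cplx) :
  alt_sum (S n) G =
  Csub (alt_sum n (fun M => G (false :: M))) (alt_sum n (fun M => G (true :: M))).
Proof.
  unfold alt_sum, Csub; simpl.
  rewrite map_app, Csum_app, !map_map, <- Csum_map_opp.
  f_equal; f_equal; apply map_ext; intro M; unfold card_marking, sign_pow; simpl;
    apply Cplx_ext; simpl; ring.
Qed.

Lemma alt_sum_ext (n : nat) (G G' : list bool -> Cplx) :
  (forall M, G M = G' M) -> alt_sum n G = alt_sum n G'.
Proof. intro HG; unfold alt_sum; f_equal; apply map_ext; intro M; rewrite HG; reflexivity. Qed.

Lemma alt_sum_flip_invariant (n k : nat) (G : list bool -> Cplx) :
  (k < n)%nat -> (forall M, G (flip k M) = G M) -> alt_sum n G = C0.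
Proof.
  revert k G; induction n as [|n IH]; intros k G Hk HG; [lia|].
  rewrite alt_sum_S; destruct k as [|k].
  - rewrite (alt_sum_ext n (fun M => G (true :: M)) (fun M => G (false :: M)))
      by (intro M; exact (HG (false :: M))).
    apply Cplx_ext; simpl; ring.
  - rewrite (IH k (fun M => G (false :: M))), (IH k (fun M => G (true :: M)));
      try lia; try (intro M; exact (HG (_ :: M))).
    apply Cplx_ext; simpl; ring.
Qed.

Lemma prop_ft_neg (alpha alpha' beta : Cplx) (x : R) :
  x < 0 -> prop_ft alpha beta x = prop_ft alpha' beta x.
Proof.
  intro Hx; unfold prop_ft.
  replace (theta x) with 0 by (unfold theta; destruct (Rlt_dec 0 x); lra).
  apply Cplx_ext; simpl; ring.
Qed.

Lemma prop_ft_pos (alpha beta beta' : Cplx) (x : R) :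
  0 < x -> prop_ft alpha beta x = prop_ft alpha beta' x.
Proof.
  intro Hx; unfold prop_ft.
  replace (theta (- x)) with 0 by (unfold theta; destruct (Rlt_dec 0 (- x)); lra).
  apply Cplx_ext; simpl; ring.
Qed.

(* The mark of the tail selects the [t > 0] exponent of the leg, the mark of the head
   its [t < 0] exponent. *)
Lemma p_tilde_flip (M : list bool) (tl hd : nat -> nat) (zp zm xp xm : nat -> Cplx)
    (j k : nat) (x : R) :
  tl j <> hd j -> (tl j = k -> x < 0) -> (hd j = k -> 0 < x) ->
  p_tilde (flip k M) tl hd zp zm xp xm j x = p_tilde M tl hd zp zm xp xm j x.
Proof.
  intros Hnt Htl Hhd; unfold p_tilde, zt, ut, vt, wt.
  destruct (Nat.eq_dec (tl j) k) as [Ht|Ht].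
  - rewrite (marked_flip_neq M k (hd j)) by congruence.
    specialize (Htl Ht).
    destruct (marked (flip k M) (tl j)), (marked M (tl j)), (marked M (hd j));
      auto using prop_ft_neg.
  - rewrite (marked_flip_neq M k (tl j)) by exact Ht.
    destruct (Nat.eq_dec (hd j) k) as [Hh|Hh].
    + specialize (Hhd Hh).
      destruct (marked (flip k M) (hd j)), (marked M (tl j)), (marked M (hd j));
        auto using prop_ft_pos.
    + rewrite (marked_flip_neq M k (hd j)) by exact Hh; reflexivity.
Qed.

Lemma exists_argmin (t : nat -> R) (n : nat) :
  (1 <= n)%nat -> exists k, (k < n)%nat /\ forall a, (a < n)%nat -> t k <= t a.
Proof.
  induction n as [|n IH]; intro Hn; [lia|].
  destruct (Nat.eq_dec n 0) as [->|Hn0].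
  - exists 0%nat; split; [lia|]; intros a Ha; replace a with 0%nat by lia; lra.
  - destruct IH as [k [Hk Hmin]]; [lia|].
    destruct (Rle_dec (t k) (t n)).
    + exists k; split; [lia|]; intros a Ha.
      destruct (Nat.eq_dec a n) as [->|]; [lra | apply Hmin; lia].
    + exists n; split; [lia|]; intros a Ha.
      destruct (Nat.eq_dec a n) as [->|]; [lra|].
      specialize (Hmin a ltac:(lia)); lra.
Qed.

Theorem mainTheorem3
  (V I : nat) (tl hd : nat -> nat)
  (Hwf : wf_diagram V I tl hd)
  (HV : (2 <= V)%nat)
  (Hconn : connected V I tl hd)
  (Hor : oriented_connected V I tl hd)
  (Htad : no_tadpoles I tl hd)
  (zp zm xp xm : nat -> Cplx)
  (Hzp : forall j, (j < I)%nat -> Im (zp j) > 0)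
  (Hxp : forall j, (j < I)%nat -> Im (xp j) > 0)
  (Hzm : forall j, (j < I)%nat -> Im (zm j) < 0)
  (Hxm : forall j, (j < I)%nat -> Im (xm j) < 0)
  (t : nat -> R)
  (Ht : forall a b, (a < V)%nat -> (b < V)%nat -> a <> b -> t a <> t b) :
  Csum (map (fun M =>
          Cmul (sign_pow (card_marking M))
               (Cprod (map (fun j => p_tilde M tl hd zp zm xp xm j (t (tl j) - t (hd j)))
                           (seq 0 I))))
        (markings V)) = C0.
Proof.
  destruct (exists_argmin t V ltac:(lia)) as [k [Hk Hmin]].
  apply (alt_sum_flip_invariant V k); [exact Hk|].
  intro M; f_equal; apply map_ext_in; intros j Hj; apply in_seq in Hj.
  destruct (Hwf j ltac:(lia)) as [Htl Hhd].
  pose proof (Htad j ltac:(lia)) as Hnt.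
  pose proof (Ht (tl j) (hd j) Htl Hhd Hnt) as Hneq.
  apply p_tilde_flip; [exact Hnt | intros <- | intros <-].
  - pose proof (Hmin (hd j) Hhd); lra.
  - pose proof (Hmin (tl j) Htl); lra.
Qed.
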